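(* Let $(X_t)_{t\ge1}$ be a Markov chain on $[K^*]$ (with arbitrary initial distribution) whose transition matrix $Q^*$ has all entries $\ge\sigma_-$, where $\sigma_-\in(0,1)$. Let $\delta>0$. Then almost surely $$\liminf_{n\to\infty}\ \inf_{S}\ \inf_{x^*\in[K^*]}\ \frac1n\sum_{t\in S}\mathbf 1\{X_t=x^*\}\ \ge\ \frac{\delta\sigma_-}{4},$$ where the infimum over $S$ is over all segments $S\subset\{1,\dots,n\}$ with $|S|\ge\delta n$, a segment being a set of the form $[a,b]\cap\mathbb Z$ with $a,b\in\mathbb R$.
   Context: $[K^*]=\{1,\dots,K^*\}$, $K^*\ge1$ an integer; $|S|$ is the cardinality of $S$. *)

From HB Require Import structures.
From mathcomp Require Import all_boot all_order all_algebra.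
From mathcomp Require Import all_classical all_reals all_analysis.
Set Implicit Arguments. Unset Strict Implicit. Unset Printing Implicit Defensive.
Import Order.TTheory GRing.Theory Num.Theory.
Local Open Scope classical_set_scope.
Local Open Scope ring_scope.

Definition stochastic_matrix (R : realType) (K : nat) (Q : 'M[R]_K) : Prop :=
  (forall i j, 0 <= Q i j) /\ (forall i, \sum_(j < K) Q i j = 1).

(* (X_t)_{t >= 1} is a (time-homogeneous) Markov chain with transition matrix Q
   under P, with arbitrary initial distribution: every X_t is measurable
   (its level sets are events) and, for every n >= 1 and every path xs,
   P(X_1 = xs 1, ..., X_{n+1} = xs (n+1))
     = P(X_1 = xs 1, ..., X_n = xs n) * Q (xs n) (xs (n+1)).
   X 0 is unused. *)
Definition markov_chain (d : measure_display) (T : measurableType d)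
  (R : realType) (K : nat) (P : probability T R)
  (X : nat -> T -> 'I_K) (Q : 'M[R]_K) : Prop :=
  (forall t (x : 'I_K), measurable (X t @^-1` [set x])) /\
  (forall (n : nat) (xs : nat -> 'I_K), (1 <= n)%N ->
     P [set w | forall t, (1 <= t <= n.+1)%N -> X t w = xs t] =
     (P [set w | forall t, (1 <= t <= n)%N -> X t w = xs t] * (Q (xs n) (xs n.+1))%:E)%E).

Definition segment_in (R : realType) (n : nat) (a b : R) : Prop :=
  forall z : int, a <= z%:~R <= b -> (1 <= z)%R /\ (z <= n%:Z)%R.

Definition seg_card (R : realType) (n : nat) (a b : R) : nat :=
  \sum_(1 <= t < n.+1 | (a <= t%:R <= b)) 1%N.

Definition seg_freq (T : Type) (R : realType) (K : nat) (X : nat -> T -> 'I_K)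
  (w : T) (n : nat) (a b : R) (x : 'I_K) : R :=
  n%:R^-1 * \sum_(1 <= t < n.+1 | (a <= t%:R <= b)) (X t w == x)%:R.

(* inf over segments S ⊂ {1..n} with |S| >= delta n and over states x
   (extended-real infimum; +oo if there is no such segment). *)
Definition min_seg_freq (T : Type) (R : realType) (K : nat)
  (X : nat -> T -> 'I_K) (delta : R) (w : T) (n : nat) : \bar R :=
  ereal_inf [set y : \bar R | exists (a b : R) (x : 'I_K),
     [/\ segment_in n a b, delta * n%:R <= (seg_card n a b)%:R &
          y = (seg_freq X w n a b x)%:E]].

From HB Require Import structures.
From mathcomp Require Import all_boot all_order all_algebra.
From mathcomp Require Import all_classical all_reals all_analysis.
From mathcomp Require Import ring lra.
Set Implicit Arguments. Unset Strict Implicit. Unset Printing Implicit Defensive.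
Import Order.TTheory GRing.Theory Num.Theory.
Local Open Scope classical_set_scope.
Local Open Scope ring_scope.

(* Fix a state [x] and a start time [s].  After time [s] every step of the
   chain lands on [x] with conditional probability at least [sigma], so
   by the Markov property [E[exp (- #visits to x during s..e)]] is at most
   [exp (- sigma (e - s) / 2)].  The Chernoff bound then shows that a segment
   of length at least [delta n] receives fewer than [delta sigma n / 4] visits
   with probability at most [e * exp (- delta sigma n / 4)].  A union over the
   [O(n^2 K)] segments and states is summable in [n], and Borel-Cantelli
   concludes. *)

Section PathSums.
Variables (R : numDomainType) (K : nat).
Implicit Types (m : nat) (xs : nat -> 'I_K.+1) (F G : (nat -> 'I_K.+1) -> R).

Definition upd xs (t : nat) (j : 'I_K.+1) : nat -> 'I_K.+1 :=
  fun u => if u == t then j else xs u.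

(* [path_sum m F] sums [F] over the paths with arbitrary values at times
   [1, ..., m] and the value [ord0] at all other times. *)
Fixpoint path_sum m F : R :=
  if m is m'.+1 then path_sum m' (fun xs => \sum_(j < K.+1) F (upd xs m'.+1 j))
  else F (fun=> ord0).

Lemma le_path_sum m F G : (forall xs, F xs <= G xs) -> path_sum m F <= path_sum m G.
Proof.
elim: m F G => [|m IH] F G FG /=; first exact: FG.
by apply: IH => xs; apply: ler_sum => j _; apply: FG.
Qed.

Lemma eq_path_sum m F G : (forall xs, F xs = G xs) -> path_sum m F = path_sum m G.
Proof.
elim: m F G => [|m IH] F G FG /=; first exact: FG.
by apply: IH => xs; apply: eq_bigr => j _; apply: FG.
Qed.

Lemma path_sumZ m c F : path_sum m (fun xs => c * F xs) = c * path_sum m F.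
Proof.
elim: m F => [|m IH] F //=.
by rewrite -IH; apply: eq_path_sum => xs; rewrite mulr_sumr.
Qed.

Lemma path_sum_sum m (I : Type) (r : seq I) (G : I -> (nat -> 'I_K.+1) -> R) :
  path_sum m (fun xs => \sum_(i <- r) G i xs) = \sum_(i <- r) path_sum m (G i).
Proof.
elim: m G => [|m IH] G //=.
by rewrite -IH; apply: eq_path_sum => xs; exact: exchange_big.
Qed.

End PathSums.

Section PathEvents.
Context d (T : measurableType d) (R : realType) (P : probability T R) (K : nat).
Variable X : nat -> T -> 'I_K.+1.
Implicit Types (A B : set T) (m : nat) (xs : nat -> 'I_K.+1).

Definition pr A : R := fine (P A).

Lemma prE A : measurable A -> P A = (pr A)%:E.
Proof. by move=> mA; rewrite /pr fineK// fin_num_measure. Qed.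

Lemma pr_ge0 A : 0 <= pr A.
Proof. by rewrite /pr fine_ge0. Qed.

Lemma le_pr A B : measurable A -> measurable B -> A `<=` B -> pr A <= pr B.
Proof. by move=> mA mB AB; rewrite -lee_fin -!prE// le_measure// inE. Qed.

Lemma pr_bigsetU_le (I : Type) (r : seq I) (p : pred I) (F : I -> set T) :
  (forall i, p i -> measurable (F i)) ->
  pr (\big[setU/set0]_(i <- r | p i) F i) <= \sum_(i <- r | p i) pr (F i).
Proof.
move=> mF; elim: r => [|i r IH]; first by rewrite !big_nil /pr measure0.
rewrite !big_cons; case: ifP => // pi.
have mU := bigsetU_measurable r mF; have mFi := mF i pi.
apply: le_trans (_ : _ <= pr (F i) + pr (\big[setU/set0]_(j <- r | p j) F j)) _.
  by rewrite -lee_fin EFinD -!prE ?measureU2//; exact: measurableU.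
by rewrite lerD2l.
Qed.

Definition cylinder m xs := [set w | forall t, (1 <= t <= m)%N -> X t w = xs t].

Definition path_of m w : nat -> 'I_K.+1 :=
  fun t => if (1 <= t <= m)%N then X t w else ord0.

Lemma path_of0 w : path_of 0 w = fun=> ord0.
Proof. by apply: funext => -[]. Qed.

Lemma path_ofS m w : path_of m.+1 w = upd (path_of m w) m.+1 (X m.+1 w).
Proof.
apply: funext => t; rewrite /path_of /upd; case: eqP => [->|/eqP tm].
  by rewrite leqnn.
by rewrite [(t <= m.+1)%N]leq_eqVlt (negbTE tm) /= ltnS.
Qed.

Lemma path_event0 (p : pred (nat -> 'I_K.+1)) :
  [set w | p (path_of 0 w)] = if p (fun=> ord0) then setT else set0.
Proof. by apply/seteqP; split => w; rewrite /= path_of0; case: (p _). Qed.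

Lemma path_eventS m (p : pred (nat -> 'I_K.+1)) B :
  [set w | p (path_of m.+1 w)] `&` B = \big[setU/set0]_(j < K.+1)
    ([set w | p (upd (path_of m w) m.+1 j)] `&` (B `&` X m.+1 @^-1` [set j])).
Proof.
apply/seteqP; split => w.
  move=> [pw Bw]; rewrite -bigcup_seq; exists (X m.+1 w).
    by rewrite /= mem_index_enum.
  by split; [rewrite /= -path_ofS|].
rewrite -bigcup_seq => -[j _ [pw [Bw /= Xj]]]; split => //.
by rewrite path_ofS Xj.
Qed.

Lemma cylinder_upd m xs j : cylinder m (upd xs m.+1 j) = cylinder m xs.
Proof.
have E t : (1 <= t <= m)%N -> upd xs m.+1 j t = xs t.
  by move=> /andP[_ tm]; rewrite /upd ifF//; apply: ltn_eqF; rewrite ltnS.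
by apply/seteqP; split => w h t tm; rewrite -?E// h// E.
Qed.

Hypothesis mX : forall t (x : 'I_K.+1), measurable (X t @^-1` [set x]).

Lemma measurable_cylinder m xs : measurable (cylinder m xs).
Proof.
elim: m => [|m IH].
  by rewrite (_ : cylinder 0 xs = setT)//; apply/seteqP; split => // w _ t /andP[/leq_trans h /h].
rewrite (_ : cylinder m.+1 xs = cylinder m xs `&` X m.+1 @^-1` [set xs m.+1]).
  exact: measurableI.
apply/seteqP; split => w.
  move=> h; split; last by apply: h; rewrite leqnn.
  by move=> t /andP[t1 tm]; apply: h; rewrite t1 (leq_trans tm).
move=> [h1 h2] t /andP[t1]; rewrite leq_eqVlt => /orP[/eqP->//|]; rewrite ltnS => tm.
by apply: h1; rewrite t1.
Qed.

Lemma measurable_path_event m (p : pred (nat -> 'I_K.+1)) B : measurable B ->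
  measurable ([set w | p (path_of m w)] `&` B).
Proof.
elim: m p B => [|m IH] p B mB.
  by rewrite path_event0; case: (p _); rewrite ?set0I ?setTI.
rewrite path_eventS; apply: bigsetU_measurable => j _.
by apply: (IH (fun xs => p (upd xs m.+1 j))); exact: measurableI.
Qed.

Lemma pr_path_event_le m (p : pred (nat -> 'I_K.+1)) B : measurable B ->
  pr ([set w | p (path_of m w)] `&` B) <=
    path_sum m (fun xs => pr (cylinder m xs `&` B) * (p xs)%:R).
Proof.
elim: m p B => [|m IH] p B mB /=.
  rewrite path_event0; case: (p _); rewrite ?set0I ?setTI ?mulr1 ?mulr0 /pr ?measure0//.
  apply: le_pr => //; first by apply: measurableI => //; exact: measurable_cylinder.
  by move=> w Bw; split => // t /andP[/leq_trans h /h].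
have mBj j : measurable (B `&` X m.+1 @^-1` [set j]) by exact: measurableI.
rewrite path_eventS path_sum_sum.
apply: le_trans (pr_bigsetU_le _ _) _ => [j _|].
  exact: (measurable_path_event _ (fun xs => p (upd xs m.+1 j))).
apply: ler_sum => j _; apply: le_trans (IH (fun xs => p (upd xs m.+1 j)) _ (mBj j)) _.
apply: le_path_sum => xs; rewrite ler_wpM2r//.
apply: le_pr; [exact: measurableI (measurable_cylinder _ _) (mBj j)|
               exact: measurableI (measurable_cylinder _ _) mB|].
move=> w [cw [Bw Xw]]; split => // t /andP[t1 tm].
rewrite /upd; case: eqP => [->//|/eqP tn]; apply: cw.
by rewrite t1 -ltnS ltn_neqAle tn.
Qed.

Lemma sum_pr_cylinder1_le1 xs : \sum_(j < K.+1) pr (cylinder 1 (upd xs 1 j)) <= 1.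
Proof.
have tF : trivIset setT (fun j : 'I_K.+1 => cylinder 1 (upd xs 1 j)).
  move=> i j _ _ [w [hi hj]].
  by have := hi 1%N isT; have := hj 1%N isT; rewrite /upd eqxx /= => -> ->.
rewrite -lee_fin -sumEFin (eq_bigr _ (fun j _ => esym (prE (measurable_cylinder 1 _)))).
rewrite -measure_bigsetU_ord//; last by move=> j; exact: measurable_cylinder.
by apply: probability_le1; apply: bigsetU_measurable => j _; exact: measurable_cylinder.
Qed.

Variable Q : 'M[R]_K.+1.
Hypothesis mc : markov_chain P X Q.

Lemma pr_cylinder_upd m xs j : (1 <= m)%N ->
  pr (cylinder m.+1 (upd xs m.+1 j)) = pr (cylinder m xs) * Q (xs m) j.
Proof.
move=> m1; apply: EFin_inj; rewrite EFinM -!prE; [|exact: measurable_cylinder..].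
have -> : P (cylinder m.+1 (upd xs m.+1 j)) = (P (cylinder m (upd xs m.+1 j)) *
    (Q (upd xs m.+1 j m) (upd xs m.+1 j m.+1))%:E)%E := mc.2 m _ m1.
by rewrite cylinder_upd /upd eqxx ifF// ltn_eqF.
Qed.

End PathEvents.

Lemma expRN1_le_half (R : realType) : expR (-1) <= 2^-1 :> R.
Proof.
rewrite expRN lef_pV2 ?posrE ?expR_gt0//.
by have := expR_ge1Dx (1 : R); rewrite (_ : 1 + 1 = 2 :> R).
Qed.

Section Visits.
Context d (T : measurableType d) (R : realType) (P : probability T R) (K : nat).
Variables (X : nat -> T -> 'I_K.+1) (Q : 'M[R]_K.+1) (sigma : R) (x : 'I_K.+1) (s : nat).
Hypotheses (mX : forall t (y : 'I_K.+1), measurable (X t @^-1` [set y]))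
  (mc : markov_chain P X Q) (stoch : stochastic_matrix Q)
  (sigma_ge0 : 0 <= sigma) (Q_ge : forall i j, sigma <= Q i j).
Implicit Types (m : nat) (xs : nat -> 'I_K.+1).

Definition visits m xs : nat := (\sum_(s <= t < m.+1) (xs t == x))%N.

Lemma visits_upd m xs j :
  visits m.+1 (upd xs m.+1 j) = (visits m xs + ((s <= m.+1) && (j == x)))%N.
Proof.
rewrite /visits; case: (leqP s m.+1) => sm /=.
  rewrite big_nat_recr //= /upd eqxx; congr (_ + _)%N.
  by apply: eq_big_nat => t /andP[_ tm]; rewrite (ltn_eqF tm).
by rewrite !big_geq ?(ltnW sm).
Qed.

Definition visits_mgf m :=
  path_sum m (fun xs => pr P (cylinder X m xs) * expR (- (visits m xs)%:R)).

(* One step of the chain lands on [x] with probability at least [sigma],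
   and [1 - expR (-1) >= 1/2]. *)
Lemma sum_kernel_visit_le i (b : bool) :
  \sum_(j < K.+1) Q i j * expR (- (b && (j == x))%:R)
  <= (if b then expR (- (sigma / 2)) else 1).
Proof.
case: b => /=; last by under eq_bigr do rewrite oppr0 expR0 mulr1; rewrite stoch.2.
rewrite (bigD1 x) //= eqxx /=.
under eq_bigr => j /negbTE-> do rewrite /= oppr0 expR0 mulr1.
have -> : \sum_(j < K.+1 | j != x) Q i j = 1 - Q i x.
  by rewrite -(stoch.2 i) [in RHS](bigD1 x) //= addrAC subrr add0r.
apply: le_trans (expR_ge1Dx _).
have e1 := expRN1_le_half R; have Qix := Q_ge i x.
have : 0 <= (Q i x - sigma) * (1 - expR (-1)) by apply: mulr_ge0; lra.
have : 0 <= sigma * (1 / 2 - expR (-1)) by apply: mulr_ge0; rewrite // subr_ge0 div1r.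
nra.
Qed.

Lemma visits_mgfS m : (1 <= m)%N ->
  visits_mgf m.+1 <= (if (s <= m.+1)%N then expR (- (sigma / 2)) else 1) * visits_mgf m.
Proof.
move=> m1; rewrite /visits_mgf /= -path_sumZ; apply: le_path_sum => xs.
under eq_bigr do rewrite (pr_cylinder_upd mX mc) // visits_upd natrD opprD expRD.
rewrite (eq_bigr (fun j => (pr P (cylinder X m xs) * expR (- (visits m xs)%:R)) *
   (Q (xs m) j * expR (- (((s <= m.+1)%N && (j == x)))%:R)))); last by move=> j _; ring.
rewrite -mulr_sumr mulrC ler_wpM2r ?sum_kernel_visit_le//.
by rewrite mulr_ge0 ?pr_ge0 ?expR_ge0.
Qed.

Lemma visits_mgf_le m : (1 <= s)%N -> (1 <= m)%N ->
  visits_mgf m <= expR (- (sigma / 2) * (m - s)%:R).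
Proof.
move=> s1; elim: m => [//|[_ _|m IH _]].
  rewrite (eqP (_ : 1 - s == 0)%N) ?subn_eq0// mulr0 expR0 /visits_mgf /=.
  apply: le_trans (sum_pr_cylinder1_le1 P mX (fun=> ord0)); apply: ler_sum => j _.
  by rewrite -[leRHS]mulr1 ler_wpM2l ?pr_ge0// expR_le1 oppr_le0.
have c0 : 0 <= (if (s <= m.+2)%N then expR (- (sigma / 2)) else 1).
  by case: ifP; rewrite ?expR_ge0.
apply: le_trans (@visits_mgfS m.+1 isT) _; apply: le_trans (ler_wpM2l c0 (IH isT)) _.
case: (leqP s m.+1) => sm.
  rewrite (leq_trans sm)// -expRD ler_expR [(m.+2 - s)%N]subSn//.
  by rewrite -[(m.+1 - s).+1]addn1 natrD; lra.
have -> : (m.+1 - s = 0)%N by apply/eqP; rewrite subn_eq0 ltnW.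
have -> : (m.+2 - s = 0)%N by apply/eqP; rewrite subn_eq0.
by rewrite mulr0 expR0 mulr1; case: ifP => // _; rewrite expR_le1 oppr_le0 divr_ge0.
Qed.

Lemma pr_few_visits_le e k : (1 <= s)%N -> (1 <= e)%N ->
  pr P [set w | (visits e (path_of X e w))%:R < k] <=
    expR k * expR (- (sigma / 2) * (e - s)%:R).
Proof.
move=> s1 e1; rewrite -[X in pr P X]setIT.
apply: le_trans (pr_path_event_le P mX e (fun xs => (visits e xs)%:R < k) measurableT) _.
apply: le_trans (ler_wpM2l (expR_ge0 k) (visits_mgf_le s1 e1)).
rewrite /visits_mgf -path_sumZ; apply: le_path_sum => xs; rewrite setIT.
have [h|h] := ltP ((visits e xs)%:R) k; last by rewrite mulr0 !mulr_ge0 ?pr_ge0 ?expR_ge0.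
rewrite mulr1 mulrCA -expRD -[leLHS]mulr1 ler_wpM2l ?pr_ge0//.
by apply: le_trans (expR_ge1Dx _); lra.
Qed.

End Visits.

Lemma segment_nat_interval (R : numDomainType) n (a b : R) :
  (exists t, (1 <= t <= n)%N && (a <= t%:R <= b)) ->
  exists s e, [/\ (1 <= s)%N, (s <= e)%N, (e <= n)%N &
    forall t, (1 <= t <= n)%N -> (a <= t%:R <= b) = (s <= t <= e)%N].
Proof.
move=> ex; have ub t : (1 <= t <= n)%N && (a <= t%:R <= b) -> (t <= n)%N.
  by case/andP => /andP[].
case: (ex_minnP ex) => s /andP[/andP[s1 _] /andP[aS _]] smin.
case: (ex_maxnP ex ub) => e /[dup] /ub en /andP[_ /andP[_ eb]] emax.
exists s, e; split => // [|t tn].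
  by case: ex => t Pt; rewrite (leq_trans (smin _ Pt) (emax _ Pt)).
apply/idP/idP => [abt|/andP[st te]]; last first.
  by rewrite (le_trans aS) ?ler_nat// (le_trans _ eb) ?ler_nat.
have Pt : (1 <= t <= n)%N && (a <= t%:R <= b) by rewrite tn abt.
by rewrite smin ?emax.
Qed.

Lemma big_nat_interval (V : Type) (idx : V) (op : Monoid.com_law idx)
  n s e (C : pred nat) (F : nat -> V) :
  (1 <= s)%N -> (s <= e)%N -> (e <= n)%N ->
  (forall t, (1 <= t <= n)%N -> C t = (s <= t <= e)%N) ->
  \big[op/idx]_(1 <= t < n.+1 | C t) F t = \big[op/idx]_(s <= t < e.+1) F t.
Proof.
move=> s1 se en hC.
rewrite (@big_cat_nat _ _ _ s) ?(leq_trans se (leq_trans en _))//.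
rewrite (@big_cat_nat _ _ _ e.+1 s) ?(leq_trans se _)//.
have out_lo : \big[op/idx]_(1 <= t < s | C t) F t = idx.
  rewrite big_nat_cond big1 // => t /andP[/andP[t1 ts]].
  by rewrite hC ?t1 ?(leq_trans (ltnW ts) (leq_trans se en))// leqNgt ts.
have out_hi : \big[op/idx]_(e.+1 <= t < n.+1 | C t) F t = idx.
  rewrite big_nat_cond big1 // => t /andP[/andP[et]]; rewrite ltnS => tn.
  by rewrite hC ?tn ?(leq_trans s1 (leq_trans se (ltnW et)))// [(t <= e)%N]leqNgt et andbF.
rewrite out_lo out_hi Monoid.mul1m Monoid.mulm1 big_nat_cond [RHS]big_nat_cond.
apply: eq_bigl => t; case: (boolP (s <= t < e.+1)%N) => //= /andP[st]; rewrite ltnS => te.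
by rewrite hC ?st ?te// (leq_trans s1 st) (leq_trans te en).
Qed.

Lemma sqr_le_expR (R : realType) (y : R) : 0 <= y -> y ^+ 2 <= 4 * expR y.
Proof.
move=> y0; have h := expR_ge1Dx (y / 2).
have -> : 4 * expR y = (2 * expR (y / 2)) ^+ 2.
  by rewrite exprMn -expRM_natl (_ : 2%:R * (y / 2) = y); [ring|field].
by rewrite lerXn2r ?nnegrE ?mulr_ge0 ?expR_ge0//; lra.
Qed.

Lemma sqr_expR_le_geometric (R : realType) (c : R) n : 0 < c ->
  (n.+1)%:R ^+ 2 * expR (- (c * n%:R)) <=
    16 / c ^+ 2 * expR (c / 2) * expR (- (c / 2)) ^+ n.
Proof.
move=> c0; set y := c * (n.+1)%:R / 2.
have y0 : 0 <= y by rewrite /y !mulr_ge0 ?ltW.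
have -> : (n.+1)%:R ^+ 2 = 4 / c ^+ 2 * y ^+ 2 by rewrite /y; field; rewrite gt_eqF.
rewrite -[leRHS]mulrA (_ : expR (c / 2) * _ = expR y * expR (- (c * n%:R))); last first.
  by rewrite -expRM_natl -!expRD /y -natr1; congr expR; field.
rewrite (_ : 16 / c ^+ 2 * _ = 4 / c ^+ 2 * (4 * expR y) * expR (- (c * n%:R))).
  by rewrite ler_wpM2r ?expR_ge0// ler_wpM2l ?sqr_le_expR// divr_ge0// exprn_ge0// ltW.
ring.
Qed.

Lemma nneseries_lty_geometric (R : realType) (u : nat -> \bar R) (A r : R) :
  0 <= A -> 0 < r -> r < 1 -> (forall n, (0 <= u n)%E) ->
  (forall n, (u n <= (A * r ^+ n)%:E)%E) -> (\sum_(0 <= n <oo) u n < +oo)%E.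
Proof.
move=> A0 r0 r1 u0 ub; apply: (@le_lt_trans _ _ (A / (1 - r))%:E); last exact: ltry.
apply: lime_le; first exact: is_cvg_ereal_nneg_natsum (fun n _ => u0 n).
apply: nearW => N; apply: (@le_trans _ _ (\sum_(0 <= i < N) (A * r ^+ i)%:E)%E).
  by apply: lee_sum => i _; exact: ub.
rewrite sumEFin lee_fin.
have r1' : `|r| < 1 by rewrite ger0_norm // ltW.
by have := geometric_le_lim N A0 r0 r1'; rewrite /series.
Qed.

Section SegmentFrequencies.
Context d (T : measurableType d) (R : realType) (P : probability T R) (K : nat).
Variables (X : nat -> T -> 'I_K.+1) (Q : 'M[R]_K.+1) (sigma delta : R).
Hypotheses (mc : markov_chain P X Q) (stoch : stochastic_matrix Q)
  (sigma_gt0 : 0 < sigma) (sigma_lt1 : sigma < 1) (Q_ge : forall i j, sigma <= Q i j)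
  (delta_gt0 : 0 < delta).

Definition rate := delta * sigma / 4.

Lemma rate_gt0 : 0 < rate.
Proof. by rewrite /rate divr_gt0// mulr_gt0. Qed.

Definition long_segment n s e := (1 <= s <= e)%N && (delta * n%:R <= (e - s).+1%:R).

Definition few_visits n s e x :=
  [set w | (visits x s e (path_of X e w))%:R < rate * n%:R].

Definition bad n := \big[setU/set0]_(i : 'I_n.+1 * 'I_n.+1 * 'I_K.+1 |
  long_segment n i.1.1 i.1.2) few_visits n i.1.1 i.1.2 i.2.

Lemma measurable_few_visits n s e x : measurable (few_visits n s e x).
Proof.
rewrite -[few_visits _ _ _ _]setIT.
exact: (measurable_path_event mc.1 e (fun xs => (visits x s e xs)%:R < rate * n%:R)).
Qed.

Lemma measurable_bad n : measurable (bad n).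
Proof. by apply: bigsetU_measurable => i _; exact: measurable_few_visits. Qed.

Lemma pr_few_visits_long n s e x : long_segment n s e ->
  pr P (few_visits n s e x) <= expR (1 - rate * n%:R).
Proof.
move=> /andP[/andP[s1 se] long].
apply: le_trans (pr_few_visits_le x mc.1 mc stoch (ltW sigma_gt0) Q_ge _ s1 (leq_trans s1 se)) _.
have exponent_le (Z N : R) : 0 <= sigma * (Z + 1 - delta * N) ->
    rate * N + - (sigma / 2) * Z <= 1 - rate * N.
  by rewrite /rate => p; have := sigma_lt1; nra.
rewrite -expRD ler_expR; apply: exponent_le.
by apply: mulr_ge0; [exact: ltW|rewrite subr_ge0 natr1].
Qed.

Lemma pr_bad_le n : pr P (bad n) <= (n.+1)%:R ^+ 2 * (K.+1)%:R * expR (1 - rate * n%:R).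
Proof.
apply: le_trans (pr_bigsetU_le _ _ (fun i _ => measurable_few_visits _ _ _ _)) _.
apply: le_trans (ler_sum _ (fun i => @pr_few_visits_long n _ _ i.2)) _.
rewrite sumr_const -[leLHS]mulr_natl ler_wpM2r ?expR_ge0//.
rewrite [leRHS](_ : _ = #|{: 'I_n.+1 * 'I_n.+1 * 'I_K.+1}|%:R).
  by rewrite ler_nat max_card.
by rewrite !card_prod !card_ord !natrM expr2.
Qed.

Lemma bad_summable : (\sum_(0 <= n <oo) P (bad n) < +oo)%E.
Proof.
have c0 := rate_gt0.
apply: (@nneseries_lty_geometric _ _
  (expR 1 * (K.+1)%:R * (16 / rate ^+ 2 * expR (rate / 2))) (expR (- (rate / 2)))).
- by rewrite !mulr_ge0 ?expR_ge0 ?invr_ge0 ?exprn_ge0 // ltW.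
- exact: expR_gt0.
- by rewrite expR_lt1 oppr_lt0 divr_gt0.
- by move=> n; exact: measure_ge0.
move=> n; rewrite (prE _ (measurable_bad n)) lee_fin.
apply: le_trans (pr_bad_le n) _.
rewrite expRD [leLHS](_ : _ = expR 1 * (K.+1)%:R * (n.+1%:R ^+ 2 * expR (- (rate * n%:R)))).
  by rewrite -[leRHS]mulrA ler_wpM2l ?mulr_ge0 ?expR_ge0// sqr_expR_le_geometric.
by ring.
Qed.

Lemma min_seg_freq_ge n w : (1 <= n)%N -> ~ bad n w ->
  (rate%:E <= min_seg_freq X delta w n)%E.
Proof.
move=> n1 good; apply: le_ereal_inf_tmp => _ [a [b [x [_ long ->]]]].
rewrite lee_fin.
have [nonempty|empty] := pselect (exists t, (1 <= t <= n)%N && (a <= t%:R <= b)); last first.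
  have : 0 < delta * n%:R by rewrite mulr_gt0// ltr0n.
  rewrite ltNge (le_trans long)// [seg_card _ _ _]big_nat_cond big1 // => t.
  by move=> /andP[/andP[t1]]; rewrite ltnS => tn abt; case: empty; exists t; rewrite t1 tn.
have [s [e [s1 se en hC]]] := segment_nat_interval nonempty.
have card : seg_card n a b = (e - s).+1.
  by rewrite /seg_card (big_nat_interval _ _ s1 se en hC) sum_nat_const_nat muln1 subSn.
have freq : seg_freq X w n a b x = n%:R^-1 * (visits x s e (path_of X e w))%:R.
  rewrite /seg_freq (big_nat_interval _ _ s1 se en hC) /visits natr_sum.
  congr (_ * _); apply: eq_big_nat => t /andP[st]; rewrite ltnS => te.
  by rewrite /path_of (leq_trans s1 st) te.
rewrite freq ler_pdivlMl ?ltr0n// mulrC leNgt; apply/negP => few; apply: good.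
have sn : (s < n.+1)%N by rewrite ltnS (leq_trans se en).
have en' : (e < n.+1)%N by rewrite ltnS.
rewrite /bad -bigcup_seq_cond; exists (Ordinal sn, Ordinal en', x) => //=.
by rewrite mem_index_enum /long_segment s1 se -card.
Qed.

Lemma ae_min_seg_freq_ge :
  {ae P, forall w, (rate%:E <= limn_einf (min_seg_freq X delta w))%E}.
Proof.
exists (lim_sup_set bad); split.
- by apply: bigcapT_measurable => k; apply: bigcup_measurable => j _; exact: measurable_bad.
- exact: lim_sup_set_cvg0 measurable_bad bad_summable.
move=> w /= not_good n _; apply: contrapT => not_bad; apply: not_good.
rewrite limn_einf_lim; apply: lime_ge; first exact: is_cvg_einfs.
exists (maxn n 1) => // k /= nk.
apply: le_ereal_inf_tmp => _ [j /= kj <-].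
have nj : (maxn n 1 <= j)%N := leq_trans nk kj.
apply: min_seg_freq_ge; first by rewrite (leq_trans _ nj)// leq_maxr.
by move=> bad_j; apply: not_bad; exists j => //=; rewrite (leq_trans _ nj)// leq_maxl.
Qed.

End SegmentFrequencies.

Theorem lemma13 (d : measure_display) (T : measurableType d) (R : realType)
  (P : probability T R) (K : nat) (X : nat -> T -> 'I_K) (Q : 'M[R]_K)
  (sigma delta : R) :
  (0 < K)%N ->
  0 < sigma < 1 ->
  stochastic_matrix Q ->
  (forall i j, sigma <= Q i j) ->
  markov_chain P X Q ->
  0 < delta ->
  {ae P, forall w, ((delta * sigma / 4)%:E <= limn_einf (min_seg_freq X delta w))%E}.
Proof.
move=> K_gt0 /andP[sigma_gt0 sigma_lt1] stoch Q_ge mc delta_gt0.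
case: K X Q K_gt0 stoch Q_ge mc => // K X Q _ stoch Q_ge mc.
exact: ae_min_seg_freq_ge mc stoch sigma_gt0 sigma_lt1 Q_ge delta_gt0.
Qed.
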